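(* Let $(X,\mu)$ be a standard Borel space with a non-atomic Borel probability measure, and let $R_{12},R_{13},R_{23}$ be SP1 equivalence relations on $X$. For $\{i,j,k\}=\{1,2,3\}$ let $R_i=R_{ij}\vee R_{ik}$ (with $R_{ji}=R_{ij}$), and assume $R_i\cap R_j=R_{ij}$ for $i\ne j$; put $R_0=R_{12}\cap R_{13}\cap R_{23}$. Suppose $R=R_1\vee R_2\vee R_3=R_{12}\vee R_{23}\vee R_{13}$ is a minimal triangle join (i.e. with $E_i:=R_i$, $E_1\vee E_2\vee E_3$ is a triangle join over $R_{12},R_{23},R_{13}$). Then $R=R_1\vee R_2$, and \[R=R_1\ast_{R_{12}}R_2\iff R_3=R_{13}\ast_{R_0}R_{23}.\]
   Context: An SP1 equivalence relation on a standard Borel space $X$ with a non-atomic Borel probability measure $\mu$ is an equivalence relation $R\subset X\times X$ that is Borel, has countable classes, and preserves $\mu$. $S\vee T$ denotes the smallest SP equivalence relation containing $S$ and $T$. Free amalgamated join: for SP1 relations $S_1,S_2$ with common subrelation $T$, a sequence $x_1,\dots,x_n$ is reduced if each $(x_k,x_{k+1})$ lies in $S_1$ or $S_2$, successive pairs lie in distinct factors, for $n>2$ no pair lies in $T$, and for $n=2$, $x_1\ne x_2$. $S_1\vee S_2$ is the free amalgamated join $S_1\ast_T S_2$ if every reduced sequence has distinct endpoints (up to a set of measure zero). Triangle join: given SP1 relations $E_1,E_2,E_3$ with $R_{ij}=E_i\cap E_j$, $R_0=E_1\cap E_2\cap E_3$, $R_i=R_{ij}\vee R_{ik}$, $E_i^\circ=E_i\setminus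 R_i$, $R_{ij}^\circ=R_{ij}\setminus R_0$ ($\{i,j,k\}=\{1,2,3\}$): a sequence $x_1,\dots,x_n$ is triangle-reduced if (a) every consecutive pair lies in one of $E_1^\circ,E_2^\circ,E_3^\circ,R_{12}^\circ,R_{13}^\circ,R_{23}^\circ$ (its type); (b) if $(x_k,x_{k+1})\in E_l^\circ$ with $\{i,j,l\}=\{1,2,3\}$, each neighbouring pair (when it exists) lies in $E_i^\circ\sqcup E_j^\circ\sqcup R_{ij}^\circ$; (c) if $(x_k,x_{k+1})\in R_{ij}^\circ$ with $\{i,j,l\}=\{1,2,3\}$, each neighbouring pair (when it exists) lies in $E_l^\circ\sqcup R_{il}^\circ\sqcup R_{jl}^\circ$. It is proper of type I if its set of types contains one of $\{E_1^\circ,R_{23}^\circ\}$, $\{E_2^\circ,R_{13}^\circ\}$, $\{E_3^\circ,R_{12}^\circ\}$, $\{E_1^\circ,E_2^\circ\}$, $\{E_2^\circ,E_3^\circ\}$, $\{E_1^\circ,E_3^\circ\}$; proper of type II if its types include all of $R_{12}^\circ,R_{13}^\circ,R_{23}^\circ$ and none of the $E_i^\circ$. A loop is a sequence with $x_1=x_n$. $E_1\vee E_2\vee E_3$ is a triangle join over $R_{12},R_{23},R_{13}$ if every proper triangle-reduced sequence of type I has distinct endpoints and every proper triangle-reduced loop of type II is a concatenation of $R_i$-loops (closed subsequences whose consecutive pairs all lie in a single $R_i$). It is a minimal triangle join when $E_i=R_i$ for $i=1,2,3$. *)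

From HB Require Import structures.
From mathcomp Require Import all_boot all_order all_algebra.
From mathcomp Require Import all_classical all_reals all_analysis.

Set Implicit Arguments. Unset Strict Implicit. Unset Printing Implicit Defensive.
Import Order.TTheory GRing.Theory Num.Theory.
Local Open Scope classical_set_scope.
Local Open Scope ring_scope.

Section Defs.
Context {d : measure_display} {T : measurableType d} {R : realType}.

(** Standard Borel space: Borel isomorphic to a Borel subset of the reals
    (via an injective measurable map sending measurable sets to Borel sets). *)
Definition standard_borel : Prop :=
  exists f : T -> R, injective f /\ measurable_fun setT f /\
    (forall A : set T, measurable A -> measurable (f @` A)).

Definition nonatomic (mu : {measure set T -> \bar R}) : Prop :=
  forall A : set T, measurable A -> (0 < mu A)%E ->
    exists B : set T, [/\ measurable B, B `<=` A & (0 < mu B < mu A)%E].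

Definition equiv_rel (E : set (T * T)) : Prop :=
  [/\ forall x, E (x, x),
      forall x y, E (x, y) -> E (y, x) &
      forall x y z, E (x, y) -> E (y, z) -> E (x, z)].

Definition SP1 (mu : {measure set T -> \bar R}) (E : set (T * T)) : Prop :=
  [/\ equiv_rel E,
      measurable E,
      forall x, countable [set y | E (x, y)] &
      forall (A : set T) (phi : T -> T), measurable A -> measurable_fun A phi ->
        {in A &, injective phi} -> (forall x, A x -> E (x, phi x)) ->
        measurable (phi @` A) -> mu (phi @` A) = mu A].

Definition join (S S' : set (T * T)) : set (T * T) :=
  [set p | forall E, equiv_rel E -> S `<=` E -> S' `<=` E -> E p].

Definition reduced (S1 S2 T0 : set (T * T)) (n : nat) (x : nat -> T) : Prop :=
  [/\ (2 <= n)%N,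
      exists f : nat -> bool, forall k, (k.+1 < n)%N ->
        (if f k then S1 else S2) (x k, x k.+1) /\
        ((k.+2 < n)%N -> f k <> f k.+1),
      (2 < n)%N -> forall k, (k.+1 < n)%N -> ~ T0 (x k, x k.+1) &
      n = 2%N -> x 0%N <> x 1%N].

Definition free_amalg (mu : {measure set T -> \bar R})
    (S1 S2 T0 E : set (T * T)) : Prop :=
  [/\ E = join S1 S2, T0 `<=` S1 `&` S2 &
      exists N : set T, [/\ measurable N, mu N = 0%E &
        forall n x, reduced S1 S2 T0 n x -> ~ N (x 0%N) ->
          x 0%N <> x n.-1]].

(** Triangle joins.  Indices 1,2,3 are 'I_3.  The type [TE l] is E_l°, and
    [TR l] is R_ij° where {i,j,l} = {1,2,3} (labelled by the missing index). *)
Inductive ttype := TE of 'I_3 | TR of 'I_3.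

Section Triangle.
Variable E : 'I_3 -> set (T * T).

Definition Rc (l : 'I_3) : set (T * T) :=
  [set p | forall m : 'I_3, m != l -> E m p].
Definition R0 : set (T * T) := [set p | forall m : 'I_3, E m p].
Definition Ri (i : 'I_3) : set (T * T) :=
  [set p | forall Q, equiv_rel Q -> (forall m : 'I_3, m != i -> Rc m `<=` Q) -> Q p].

Definition trel (t : ttype) : set (T * T) :=
  match t with
  | TE l => E l `\` Ri l
  | TR l => Rc l `\` R0
  end.

Definition tcompat (t t' : ttype) : bool :=
  match t, t' with
  | TE l, TE m => l != m
  | TE l, TR m => l == m
  | TR l, TE m => l == m
  | TR l, TR m => l != m
  end.

Definition treduced_typed (n : nat) (x : nat -> T) (t : nat -> ttype) : Prop :=
  forall k, (k.+1 < n)%N -> trel (t k) (x k, x k.+1) /\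
    ((k.+2 < n)%N -> tcompat (t k) (t k.+1)).

Definition has_type (n : nat) (t : nat -> ttype) (u : ttype) : Prop :=
  exists2 k, (k.+1 < n)%N & t k = u.

Definition proper_I (n : nat) (t : nat -> ttype) : Prop :=
  (exists l, has_type n t (TE l) /\ has_type n t (TR l)) \/
  (exists l m, l != m /\ has_type n t (TE l) /\ has_type n t (TE m)).

Definition proper_II (n : nat) (t : nat -> ttype) : Prop :=
  (forall l, has_type n t (TR l)) /\ (forall l, ~ has_type n t (TE l)).

Definition concat_Ri_loops (n : nat) (x : nat -> T) : Prop :=
  exists (m : nat) (b : nat -> nat),
    [/\ b 0%N = 0%N, b m = n.-1,
        forall j, (j < m)%N -> (b j < b j.+1)%N,
        forall j, (j <= m)%N -> x (b j) = x 0%N &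
        forall j, (j < m)%N -> exists i : 'I_3,
          forall k, (b j <= k < b j.+1)%N -> Ri i (x k, x k.+1)].

Definition triangle_join (mu : {measure set T -> \bar R}) : Prop :=
  exists N : set T, [/\ measurable N, mu N = 0%E,
    (forall n x t, treduced_typed n x t -> proper_I n t -> ~ N (x 0%N) ->
        x 0%N <> x n.-1) &
    (forall n x t, treduced_typed n x t -> proper_II n t -> x 0%N = x n.-1 ->
        ~ N (x 0%N) -> concat_Ri_loops n x)].

End Triangle.

End Defs.

Definition fam3 {A : Type} (a b c : A) (i : 'I_3) : A :=
  match val i with 0 => a | 1 => b | _ => c end.

(* Since R3 is contained in R1 \/ R2, R = R1 \/ R2. A reduced R13/R23-word over
   R0 is also a reduced R1/R2-word over R12 (an R13-step lying in R12 lies in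
   R2 /\ R3 = R23), so freeness passes from R1 *_{R12} R2 to R3.
   Conversely, expand each syllable of a reduced R1/R2-loop into a chain of
   R12-steps and R13- (resp. R23-) steps, and shorten the expansion until
   consecutive steps have different kinds and no step lies in R0. Without
   R12-steps the loop is an alternating R13/R23-loop, which freeness of R3
   forbids. Otherwise all three kinds occur, so it is a proper type II loop and
   begins with a subloop inside some R_i. Inside R3 that subloop has no R12-step
   and is forbidden again; inside the R_i of the second syllable its first
   steps have forbidden kinds; inside the R_i of the first syllable it cannot
   leave that syllable, which can therefore be cut off, leaving a shorter
   counterexample. *)

From HB Require Import structures.
From mathcomp Require Import all_boot all_order all_algebra.
From mathcomp Require Import all_classical all_reals all_analysis.
From mathcomp Require Import zify.
From Stdlib Require Import Relation_Operators Operators_Properties.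
Local Open Scope classical_set_scope.

Set Implicit Arguments. Unset Strict Implicit.

Section Chains.
Context {X A : Type}.
Implicit Types (u : X) (l : seq (A * X)).

Definition endp u l := last u (map snd l).
Definition pt u l k := nth u (u :: map snd l) k.
Definition lbl (a0 : A) l k := nth a0 (map fst l) k.

Fixpoint chain (F : A -> set (X * X)) u l : Prop :=
  if l is s :: l' then F s.1 (u, s.2) /\ chain F s.2 l' else True.

Fixpoint reduced_chain (Z : set (X * X)) u l : Prop :=
  if l is s :: l' then
    [/\ ~ Z (u, s.2), (if l' is s' :: _ then s.1 <> s'.1 else True)
      & reduced_chain Z s.2 l']
  else True.

Lemma endp_cat u l1 l2 : endp u (l1 ++ l2) = endp (endp u l1) l2.
Proof. by rewrite /endp map_cat last_cat. Qed.

Lemma endp_rcons u l s : endp u (rcons l s) = s.2.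
Proof. by rewrite /endp map_rcons last_rcons. Qed.

Lemma pt_size u l : pt u l (size l) = endp u l.
Proof.
by rewrite /pt /endp -(size_map snd) -[last _ _]/(last u (u :: _)) -nth_last.
Qed.

Lemma pt_cons u s l k : k <= size l -> pt u (s :: l) k.+1 = pt s.2 l k.
Proof. by move=> le_k; apply: set_nth_default; rewrite /= size_map ltnS. Qed.

Lemma pt_cat_l u l1 l2 k : k <= size l1 -> pt u (l1 ++ l2) k = pt u l1 k.
Proof.
by move=> le_k; rewrite /pt map_cat -cat_cons nth_cat /= size_map ltnS le_k.
Qed.

Lemma pt_cat_r u l1 l2 k : k <= size l2 ->
  pt u (l1 ++ l2) (size l1 + k) = pt (endp u l1) l2 k.
Proof.
case: k => [_|k lt_k]; first by rewrite addn0 pt_cat_l // pt_size.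
rewrite /pt map_cat -cat_cons nth_cat /= size_map addnS ltnS ltnNge leq_addr /=.
by rewrite subSS addKn; apply: set_nth_default; rewrite size_map.
Qed.

Lemma lbl_cat_l a0 l1 l2 k : k < size l1 -> lbl a0 (l1 ++ l2) k = lbl a0 l1 k.
Proof. by move=> lt_k; rewrite /lbl map_cat nth_cat size_map lt_k. Qed.

Lemma lbl_cat_r a0 l1 l2 k : lbl a0 (l1 ++ l2) (size l1 + k) = lbl a0 l2 k.
Proof. by rewrite /lbl map_cat nth_cat size_map ltnNge leq_addr /= addKn. Qed.

Lemma chain_cat F u l1 l2 :
  chain F u (l1 ++ l2) <-> chain F u l1 /\ chain F (endp u l1) l2.
Proof.
elim: l1 u => [|s l1 IH] u /=; first by split=> [|[]].
by rewrite IH; split=> [[? []]|[[? ?] ?]].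
Qed.

Lemma reduced_chain_cat Z u l1 l2 :
  reduced_chain Z u l1 -> reduced_chain Z (endp u l1) l2 ->
  (forall l1' s s' l2', l1 = rcons l1' s -> l2 = s' :: l2' -> s.1 <> s'.1) ->
  reduced_chain Z u (l1 ++ l2).
Proof.
elim: l1 u => [//|s l1 IH] u /= [notZ alt red1] red2 junction; split => //.
  case: l1 {IH red1 red2} alt junction => [|s1 l1] alt junction //=.
  by case: l2 junction => [//|s' l2] /(_ [::] s s' l2); apply.
apply: IH => // l1' t t' l2' def_l1; apply: (junction (s :: l1')).
by rewrite def_l1.
Qed.

Lemma chain_nth F a0 u l k :
  chain F u l -> k < size l -> F (lbl a0 l k) (pt u l k, pt u l k.+1).
Proof.
elim: l u k => [//|s l IH] u [|k] /= [hs hl] lt_k //.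
by rewrite !pt_cons //; [exact: IH | exact: ltnW].
Qed.

Lemma reduced_chain_nth Z a0 u l k : reduced_chain Z u l -> k < size l ->
  ~ Z (pt u l k, pt u l k.+1) /\ (k.+1 < size l -> lbl a0 l k <> lbl a0 l k.+1).
Proof.
elim: l u k => [//|s l IH] u [|k] /= [notZ alt red] lt_k.
  by split=> //; case: l {IH red lt_k} alt.
by rewrite !pt_cons //; [exact: IH | exact: ltnW].
Qed.

Lemma chain_drop F u l k : chain F u l -> k <= size l ->
  chain F (pt u l k) (drop k l) /\ endp (pt u l k) (drop k l) = endp u l.
Proof.
elim: l u k => [|s l IH] u [|k] //= [_ hl] le_k.
by rewrite pt_cons //; exact: IH.
Qed.

End Chains.

Section ChainMap.
Context {X A B : Type} (g : A -> B).

Definition relabel (l : seq (A * X)) := [seq (g s.1, s.2) | s <- l].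

Lemma size_relabel l : size (relabel l) = size l.
Proof. exact: size_map. Qed.

Lemma map_snd_relabel l : map snd (relabel l) = map snd l.
Proof. by rewrite -map_comp. Qed.

Lemma pt_relabel u l k : pt u (relabel l) k = pt u l k.
Proof. by rewrite /pt map_snd_relabel. Qed.

Lemma endp_relabel u l : endp u (relabel l) = endp u l.
Proof. by rewrite /endp map_snd_relabel. Qed.

Lemma lbl_relabel a0 b0 l k : k < size l -> lbl b0 (relabel l) k = g (lbl a0 l k).
Proof.
rewrite /lbl.
have -> : map fst (relabel l) = map g (map fst l) by rewrite -!map_comp.
by move=> lt_k; rewrite (nth_map a0) ?size_map.
Qed.

Lemma chain_relabel (F : B -> set (X * X)) u l :
  chain F u (relabel l) <-> chain (F \o g) u l.
Proof. by elim: l u => [|s l IH] u //=; rewrite IH. Qed.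

Lemma reduced_chain_relabel Z u l : injective g ->
  reduced_chain Z u l -> reduced_chain Z u (relabel l).
Proof.
move=> g_inj; elim: l u => [//|s l IH] u /= [notZ alt red]; split=> //; last exact: IH.
by case: l {IH red} alt => [//|s' l] alt /g_inj.
Qed.

End ChainMap.

Section Joins.
Context {d : measure_display} {X : measurableType d}.
Implicit Types (S E : set (X * X)).

Lemma join_equiv S S' : equiv_rel (join S S').
Proof.
split=> [x E [reflE _ _] _ _ | x y xy E eqE sE sE' | x y z xy yz E eqE sE sE'].
- exact: reflE.
- by case: (eqE) => _ symE _; apply: symE; apply: xy.
- by case: (eqE) => _ _ transE; apply: transE (xy _ _ sE sE') (yz _ _ sE sE').
Qed.

Lemma join_subl S S' : S `<=` join S S'.
Proof. by move=> p Sp E _ sE _; apply: sE. Qed.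

Lemma join_subr S S' : S' `<=` join S S'.
Proof. by move=> p S'p E _ _ sE'; apply: sE'. Qed.

Lemma join_min S S' E : equiv_rel E -> S `<=` E -> S' `<=` E -> join S S' `<=` E.
Proof. by move=> eqE sE sE' p; apply. Qed.

Lemma join_absorb S1 S2 S3 : S3 `<=` join S1 S2 -> join (join S1 S2) S3 = join S1 S2.
Proof.
move=> sub3; apply/seteqP; split; last exact: join_subl.
exact: join_min (join_equiv _ _) _ sub3.
Qed.

Lemma join_chain (F : bool -> set (X * X)) u v :
  equiv_rel (F true) -> equiv_rel (F false) -> join (F true) (F false) (u, v) ->
  exists2 p, chain F u p & endp u p = v.
Proof.
move=> [_ symT _] [_ symF _] uv.
pose U x y := F true (x, y) \/ F false (x, y).
have symU x y : U x y -> U y x by case=> [/symT|/symF]; [left | right].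
have eqU : equiv_rel [set q | clos_refl_trans X U q.1 q.2].
  split=> [x | x y /= | x y z /=]; first exact: rt_refl.
  - elim=> [x' y' /symU | x' | x' y' z' _ IH1 _ IH2]; first exact: rt_step.
      exact: rt_refl.
    exact: rt_trans IH2 IH1.
  - exact: rt_trans.
have rt_uv : clos_refl_trans X U u v.
  by apply: (uv _ eqU) => -[x y] Fxy; apply: rt_step; [left | right].
elim: (clos_rt_rt1n _ _ _ _ rt_uv) => [x | x y z xy _ [p ch <-]]; first by exists [::].
by case: xy => Fxy; [exists ((true, y) :: p) | exists ((false, y) :: p)].
Qed.

Lemma Ri_sub (E : 'I_3 -> set (X * X)) i : equiv_rel (E i) -> Ri E i `<=` E i.
Proof. by move=> eqE p; apply=> // m ne_mi q; apply; rewrite eq_sym. Qed.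

Lemma free_amalg_sub (R : realType) (mu : {measure set X -> \bar R}%R)
    S1 S2 T0 E S1' S2' T0' :
  S1' `<=` S1 -> S2' `<=` S2 -> T0' `<=` S1' `&` S2' ->
  S1' `&` T0 `<=` T0' -> S2' `&` T0 `<=` T0' ->
  free_amalg mu S1 S2 T0 E -> free_amalg mu S1' S2' T0' (join S1' S2').
Proof.
move=> sub1 sub2 subT0 T01 T02 [_ _ [N [mN N0 free]]]; split => //.
exists N; split => // n x [n_ge2 [f alt] notT0 ne2] xN.
apply: free => //; split => //.
- exists f => k lt_k; have [step alt'] := alt k lt_k; split => //.
  by case: (f k) step; [apply: sub1 | apply: sub2].
- move=> n_gt2 k lt_k T0k; apply: (notT0 n_gt2 k lt_k).
  have [step _] := alt k lt_k.
  by case: (f k) step => step; [apply: T01 | apply: T02].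
Qed.

End Joins.

Inductive kind := K12 | K13 | K23.

(* In this section S_ij, Qc true, Qc false, Q3 and S0 stand for the paper's
   R_ij, R_1, R_2, R_3 and R_0; the colour c = true (resp. false) refers to R_1
   (resp. R_2), whose steps not in R12 have kind own_kind c. *)
Section Triangle.
Context {d : measure_display} {X : measurableType d}.
Variables S12 S13 S23 : set (X * X).
Hypotheses (S12_equiv : equiv_rel S12) (S13_equiv : equiv_rel S13)
  (S23_equiv : equiv_rel S23).

Definition Sk k := match k with K12 => S12 | K13 => S13 | K23 => S23 end.
Definition S0 := S12 `&` S13 `&` S23.
Definition own_kind (c : bool) := if c then K13 else K23.
Definition step_kind c (shared : bool) := if shared then K12 else own_kind c.
Definition Qc c := join S12 (Sk (own_kind c)).
Definition Q3 := join S13 S23.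

Hypothesis Qc_meet : Qc true `&` Qc false `<=` S12.
Hypothesis Qc_Q3_meet : forall c, Qc c `&` Q3 `<=` Sk (own_kind c).

Lemma Sk_equiv k : equiv_rel (Sk k). Proof. by case: k. Qed.

Lemma Sk_trans k x y z : Sk k (x, y) -> Sk k (y, z) -> Sk k (x, z).
Proof. by case: (Sk_equiv k) => _ _; apply. Qed.

Lemma S0_Sk k : S0 `<=` Sk k. Proof. by move=> p [[? ?] ?]; case: k. Qed.

Lemma S0_refl x : S0 (x, x).
Proof. by do 2?split; [case: S12_equiv | case: S13_equiv | case: S23_equiv]. Qed.

Lemma own_sub_Q3 c : Sk (own_kind c) `<=` Q3.
Proof. by case: c; [apply: join_subl | apply: join_subr]. Qed.

Lemma own_Qc_S0 c p : Sk (own_kind c) p -> Qc (~~ c) p -> S0 p.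
Proof.
move=> own_p Q'p; have Qp : Qc c p by apply: join_subr.
have S12p : S12 p by apply: Qc_meet; case: c Qp Q'p own_p => /= Qp Q'p.
have own'p : Sk (own_kind (~~ c)) p.
  by apply: (Qc_Q3_meet (c := ~~ c)); split=> //; apply: (own_sub_Q3 own_p).
by case: c {Qp Q'p} own_p own'p => /= ? ?; do !split.
Qed.

Lemma S12_Q3_S0 p : S12 p -> Q3 p -> S0 p.
Proof.
move=> S12p Q3p; have own_p c : Sk (own_kind c) p.
  by apply: (Qc_Q3_meet (c := c)); split=> //; apply: join_subl.
by do !split=> //; [apply: (own_p true) | apply: (own_p false)].
Qed.

Lemma step_kind_inj c : injective (step_kind c).
Proof. by case: c => -[] []. Qed.

Lemma step_kind_neq_own c sh : step_kind c sh <> own_kind (~~ c).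
Proof. by case: c; case: sh. Qed.

Lemma step_kind_neq c c' sh sh' :
  c != c' -> ~~ (sh && sh') -> step_kind c sh <> step_kind c' sh'.
Proof. by case: c; case: c'; case: sh; case: sh'. Qed.

Lemma kind_cases c k : k <> own_kind (~~ c) -> k = K12 \/ k = own_kind c.
Proof. by case: c; case: k; auto. Qed.

Notation block_chain c := (chain (Sk \o step_kind c)).

Lemma chain_reduce c u p : block_chain c u p ->
  [\/ reduced_chain S0 u p,
      exists p', [/\ block_chain c u p', endp u p' = endp u p & size p' < size p]
    | exists2 s, p = [:: s] & S0 (u, s.2)].
Proof.
elim: p u => [|s p IH] u /=; first by move=> _; apply: Or31.
case=> hs hc; case: (IH _ hc) => [red | [p' [hc' ep' lt_p']] | [s' def_p S0s']].
- have [S0s | notS0s] := pselect (S0 (u, s.2)).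
    case: p hc red {IH} => [|s' p] hc red; first by apply: Or33; exists s.
    apply: Or32; exists (s' :: p); split=> //=.
    by case: hc => hs' hc; split=> //; apply: Sk_trans hs'; apply: S0_Sk.
  case: p hc red {IH} => [|s' p] hc red; first by apply: Or31.
  have [eq_sh | ne_sh] := eqVneq s.1 s'.1.
    apply: Or32; exists ((s.1, s'.2) :: p); split=> //=.
    by case: hc => hs' hc; split=> //; apply: Sk_trans hs _; rewrite /= eq_sh.
  by apply: Or31; split=> //; apply/eqP.
- by apply: Or32; exists (s :: p'); split=> //=; rewrite ep'.
- subst p; apply: Or32; exists [:: (s.1, s'.2)]; split=> //=.
  by split=> //; apply: Sk_trans hs _; apply: S0_Sk.
Qed.

Lemma block_has_own_step c u p : block_chain c u p -> ~ S12 (u, endp u p) ->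
  exists2 k, k < size p & lbl false p k = false.
Proof.
elim: p u => [|s p IH] u /=.
  by move=> _; case: S12_equiv => reflS _ _; case; apply: reflS.
case=> hs hc notS12; case sh: s.1; last by exists 0.
have [k lt_k own_k] : exists2 k, k < size p & lbl false p k = false.
  apply: IH hc _ => S12e; apply: notS12.
  by case: S12_equiv => _ _ transS; apply: transS S12e; rewrite /= sh in hs.
by exists k.+1.
Qed.

Section Words.
Variable a : X.

(* [qword a pc u bs]: bs lists the syllables of a reduced R1/R2-word from u to a,
   the syllable (c, p) being an R_c-step expanded as a chain p of R12-steps
   (label true) and steps of kind own_kind c; pc is the colour of the previous
   syllable. *)
Fixpoint qword (pc : option bool) u (bs : seq (bool * seq (bool * X))) : Prop :=
  if bs is b :: bs' then
    [/\ pc <> Some b.1, block_chain b.1 u b.2, ~ S12 (u, endp u b.2)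
      & qword (Some b.1) (endp u b.2) bs']
  else u = a.

Fixpoint qword_reduced u (bs : seq (bool * seq (bool * X))) : Prop :=
  if bs is b :: bs' then
    [/\ reduced_chain S0 u b.2,
        (if bs' is b' :: _ then ~~ ((last (false, u) b.2).1 && (head (false, u) b'.2).1)
         else True)
      & qword_reduced (endp u b.2) bs']
  else True.

Definition wlen (bs : seq (bool * seq (bool * X))) := sumn [seq size b.2 | b <- bs].

Lemma qword_shift pc u c c' (p p' : seq (bool * X)) (s s' : bool * X) bs :
  s.1 -> s'.1 ->
  qword pc u ((c, rcons p s) :: (c', s' :: p') :: bs) ->
  qword pc u ((c, p) :: (c', (true, s'.2) :: p') :: bs).
Proof.
case: S12_equiv => _ symS transS sh sh'.
rewrite /= endp_rcons -cats1 => -[pc_c /chain_cat[ch /= [+ _]] notS12 [cc' [+ ch'] notS12' w]].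
rewrite /= sh sh' => S12s S12s'.
split=> //; first by move=> S12e; apply: notS12; apply: transS S12e S12s.
split=> //=; first by split=> //; apply: transS S12s S12s'.
by move=> S12e; apply: notS12'; apply: transS (symS _ _ S12s) S12e.
Qed.

Lemma qword_reduce pc u bs : qword pc u bs ->
  qword_reduced u bs \/ exists bs', [/\ bs' <> [::], qword pc u bs' & wlen bs' < wlen bs].
Proof.
elim: bs pc u => [|[c p] bs IH] pc u /=; first by left.
case=> pc_c ch notS12 w; case: (IH _ _ w) => [red | [bs' [ne_bs' w' lt_bs']]]; last first.
  by right; exists ((c, p) :: bs'); split=> //; rewrite /wlen /= ltn_add2l.
case: (chain_reduce ch) => [redp | [p' [ch' ep' lt_p']] | [s def_p S0s]].
- case: bs w red {IH} => [|[c' p2] bs] w red; first by left.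
  have [/andP[sh sh2] | ?] := boolP ((last (false, u) p).1 && (head (false, u) p2).1);
    last by left; split.
  case/lastP: p ch notS12 redp w red sh => [|p0 s] // ch notS12 redp w red.
  case: p2 w red sh2 => [//|s2 p2] w red; rewrite last_rcons /= => sh2 sh.
  right; exists ((c, p0) :: (c', (true, s2.2) :: p2) :: bs); split=> //.
    by apply: (qword_shift sh sh2); split.
  by rewrite /wlen /= size_rcons; lia.
- by right; exists ((c, p') :: bs); split=> //=; rewrite ?ep' // /wlen /= ltn_add2r.
- by case: notS12; rewrite def_p; apply: (S0_Sk K12).
Qed.

Definition qword_walk (bs : seq (bool * seq (bool * X))) :=
  flatten [seq relabel (step_kind b.1) b.2 | b <- bs].

Lemma qword_walk_chain pc u bs : qword pc u bs -> chain Sk u (qword_walk bs).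
Proof.
elim: bs pc u => [//|[c p] bs IH] pc u /= [_ ch _ w].
by apply/chain_cat; split; [apply/chain_relabel | rewrite endp_relabel; apply: IH w].
Qed.

Lemma qword_walk_endp pc u bs : qword pc u bs -> endp u (qword_walk bs) = a.
Proof.
elim: bs pc u => [//|[c p] bs IH] pc u /= [_ _ _ w].
by rewrite endp_cat endp_relabel; apply: IH w.
Qed.

Lemma block_nonempty u (p : seq (bool * X)) : ~ S12 (u, endp u p) -> p <> [::].
Proof. by case: S12_equiv => reflS _ _ notS12 def_p; apply: notS12; rewrite def_p. Qed.

Lemma qword_walk_reduced pc u bs : qword pc u bs -> qword_reduced u bs ->
  reduced_chain S0 u (qword_walk bs).
Proof.
elim: bs pc u => [//|[c p] bs IH] pc u /= [_ ch notS12 w] [redp junction red].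
apply: reduced_chain_cat; first exact: reduced_chain_relabel (@step_kind_inj c) redp.
  by rewrite endp_relabel; apply: IH w red.
move=> l1 s s' l2 def_l1 def_l2.
case: bs w junction def_l2 {IH red} => [//|[c' p2] bs] /= [cc' _ notS12' _] junction.
case: p2 notS12' junction => [/block_nonempty//|s2 p2] _ junction [<- _] /=.
case/lastP: p def_l1 junction {ch redp notS12} => [|p0 s0]; first by case: l1.
rewrite /relabel map_rcons last_rcons => /rcons_inj[_ <-] /= junction.
by apply: step_kind_neq => //; apply/eqP => cc; apply: cc'; rewrite cc.
Qed.

End Words.

(* The two hypotheses on R at a point v off the exceptional null sets: R3 is the
   free join R13 *_{R0} R23 at v, and type II triangle-reduced loops at v begin
   with an R_i-subloop. *)
Definition Q3_free_at v := forall (L : nat) (x : nat -> X) (t : nat -> kind),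
  0 < L -> x 0 = v -> x L = v ->
  (forall k, k < L -> [/\ t k <> K12, Sk (t k) (x k, x k.+1) & ~ S0 (x k, x k.+1)]) ->
  (forall k, k.+1 < L -> t k <> t k.+1) -> False.

Definition typeII_splits_at v := forall (L : nat) (x : nat -> X) (t : nat -> kind),
  x 0 = v -> x L = v ->
  (forall k, k < L -> Sk (t k) (x k, x k.+1) /\ ~ S0 (x k, x k.+1)) ->
  (forall k, k.+1 < L -> t k <> t k.+1) ->
  (forall kd, exists2 k, k < L & t k = kd) ->
  exists2 b, 0 < b <= L & x b = v /\
    ((exists c, forall k, k < b -> Qc c (x k, x k.+1)) \/
     forall k, k < b -> Q3 (x k, x k.+1)).

Section Loop.
Variables (a : X) (x : nat -> X) (t : nat -> kind) (L : nat).
Hypotheses (x0 : x 0 = a) (xL : x L = a).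
Hypothesis walk_step : forall k, k < L -> Sk (t k) (x k, x k.+1) /\ ~ S0 (x k, x k.+1).
Hypothesis walk_alt : forall k, k.+1 < L -> t k <> t k.+1.

Lemma Qc_step_kind c k : k < L -> Qc c (x k, x k.+1) -> t k <> own_kind (~~ c).
Proof.
move=> lt_k Qk tk; have [Sk_k notS0] := walk_step lt_k; apply: notS0.
by apply: (own_Qc_S0 (c := ~~ c)); rewrite ?negbK -?tk.
Qed.

Lemma Q3_step_kind k : k < L -> Q3 (x k, x k.+1) -> t k <> K12.
Proof.
move=> lt_k Q3k tk; have [Sk_k notS0] := walk_step lt_k; apply: notS0.
by rewrite tk in Sk_k; apply: S12_Q3_S0.
Qed.

Hypothesis Q3_free : Q3_free_at a.

Lemma no_subloop_without_K12 b :
  0 < b <= L -> x b = a -> (forall k, k < b -> t k <> K12) -> False.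
Proof.
move=> /andP[b_gt0 le_bL] xb noK12; apply: (@Q3_free b x t b_gt0 x0 xb) => k lt_k.
  have [Sk_k notS0] := walk_step (leq_trans lt_k le_bL).
  by split=> //; apply: noK12.
by apply: walk_alt; apply: leq_trans lt_k le_bL.
Qed.

Variables (c : bool) (n1 n2 : nat).
Hypotheses (n1_gt0 : 0 < n1) (n2_gt0 : 0 < n2) (n12_le : n1 + n2 <= L).
Hypothesis block1_kind : forall k, k < n1 -> t k <> own_kind (~~ c).
Hypothesis block2_kind : forall k, k < n2 -> t (n1 + k) <> own_kind c.
Hypothesis block1_ends : ~ S12 (a, x n1).
Hypothesis block2_ends : ~ S12 (x n1, x (n1 + n2)).

Lemma no_opposite_Qc_subloop b :
  0 < b -> x b = a -> (forall k, k < b -> Qc (~~ c) (x k, x k.+1)) -> False.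
Proof.
move=> b_gt0 xb Qb; have L_gt0 : 0 < L by lia.
have t0 : t 0 = K12.
  have [//|t0] := kind_cases (block1_kind n1_gt0).
  by case: (Qc_step_kind L_gt0 (Qb 0 b_gt0)); rewrite negbK.
have [S12_0 notS0_0] := walk_step L_gt0; rewrite t0 x0 in S12_0 notS0_0.
have [b1 | b_gt1] : b = 1 \/ 1 < b by lia.
  by apply: notS0_0; rewrite -b1 xb; apply: S0_refl.
have [n1_1 | n1_gt1] : n1 = 1 \/ 1 < n1 by lia.
  by apply: block1_ends; rewrite n1_1.
have L_gt1 : 1 < L by lia.
have [t1 | t1] := kind_cases (block1_kind n1_gt1).
  by apply: (walk_alt L_gt1); rewrite t0 t1.
by apply: (Qc_step_kind L_gt1 (Qb 1 b_gt1)); rewrite negbK.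
Qed.

Lemma Qc_subloop_in_first_block b :
  x b = a -> (forall k, k < b -> Qc c (x k, x k.+1)) -> b <= n1.
Proof.
move=> xb Qb; rewrite leqNgt; apply/negP => lt_n1b.
have lt_n1L : n1 < L by lia.
have tn1 : t n1 = K12.
  have [//|tn1] := kind_cases (Qc_step_kind lt_n1L (Qb _ lt_n1b)).
  by case: (block2_kind n2_gt0); rewrite addn0.
have [S12_n1 _] := walk_step lt_n1L; rewrite tn1 in S12_n1.
have [b_n1 | lt_n1b'] : b = n1.+1 \/ n1.+1 < b by lia.
  by case: S12_equiv => _ symS _; apply: block1_ends; apply: symS; rewrite -xb b_n1.
have [n2_1 | n2_gt1] : n2 = 1 \/ 1 < n2 by lia.
  by apply: block2_ends; rewrite n2_1 addn1.
have lt_n1L' : n1.+1 < L by lia.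
have [tn1' | tn1'] := kind_cases (Qc_step_kind lt_n1L' (Qb _ lt_n1b')).
  by apply: (walk_alt lt_n1L'); rewrite tn1 tn1'.
by case: (block2_kind n2_gt1); rewrite addn1.
Qed.

Hypothesis typeII : typeII_splits_at a.
Hypothesis block1_own : exists2 k, k < L & t k = own_kind c.
Hypothesis block2_own : exists2 k, k < L & t k = own_kind (~~ c).

Lemma subloop_in_first_block : exists2 b, 0 < b <= n1 & x b = a.
Proof.
have L_gt0 : 0 < L by lia.
have [[k0 lt_k0 tk0] | noK12] := pselect (exists2 k, k < L & t k = K12); last first.
  exfalso; apply: (no_subloop_without_K12 _ xL); first by rewrite L_gt0 leqnn.
  by move=> k lt_k tk; apply: noK12; exists k.
have all_kinds kd : exists2 k, k < L & t k = kd.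
  case: c block1_own block2_own => -[k1 lt1 t1] [k2 lt2 t2].
    by case: kd; [exists k0 | exists k1 | exists k2].
  by case: kd; [exists k0 | exists k2 | exists k1].
have [b /andP[b_gt0 le_bL] [xb [[dd Qb] | Q3b]]] :=
  typeII x0 xL walk_step walk_alt all_kinds; last first.
  exfalso; apply: (no_subloop_without_K12 _ xb); first by rewrite b_gt0 le_bL.
  by move=> k lt_k; apply: Q3_step_kind (leq_trans lt_k le_bL) (Q3b k lt_k).
have [dd_c | dd_nc] : dd = c \/ dd = ~~ c by case: (dd); case: (c); auto.
  by exists b; rewrite ?b_gt0 ?(Qc_subloop_in_first_block xb) // -dd_c.
by exfalso; apply: (no_opposite_Qc_subloop b_gt0 xb); rewrite -dd_nc.
Qed.

End Loop.

Section Shrink.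
Variable a : X.
Hypotheses (Q3_free : Q3_free_at a) (typeII : typeII_splits_at a).

Lemma two_block_walk c p1 c' p2 rest (l := qword_walk ((c, p1) :: (c', p2) :: rest)) :
  [/\ forall k, k <= size p1 -> pt a l k = pt a p1 k,
      pt a l (size p1 + size p2) = endp (endp a p1) p2,
      forall k, k < size p1 -> lbl K12 l k = step_kind c (lbl false p1 k),
      forall k, k < size p2 -> lbl K12 l (size p1 + k) = step_kind c' (lbl false p2 k)
    & size p1 + size p2 <= size l].
Proof.
have -> : l = relabel (step_kind c) p1 ++ (relabel (step_kind c') p2 ++ qword_walk rest).
  by [].
split=> [k le_k | | k lt_k | k lt_k |].
- by rewrite pt_cat_l ?size_relabel // pt_relabel.
- rewrite -(size_relabel (step_kind c)) pt_cat_r ?size_cat ?size_relabel ?leq_addr //.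
  by rewrite pt_cat_l ?size_relabel // pt_relabel pt_size endp_relabel.
- by rewrite lbl_cat_l ?size_relabel // (lbl_relabel _ false).
- rewrite -(size_relabel (step_kind c)) lbl_cat_r.
  by rewrite lbl_cat_l ?size_relabel // (lbl_relabel _ false).
- by rewrite !size_cat !size_relabel addnA leq_addr.
Qed.

Lemma reduced_qword_subloop c p1 c' p2 rest (bs := (c, p1) :: (c', p2) :: rest) :
  qword a None a bs -> qword_reduced a bs -> exists2 b, 0 < b <= size p1 & pt a p1 b = a.
Proof.
move=> w red; have ch := qword_walk_chain w; have rd := qword_walk_reduced w red.
have [pt1 pt12 lbl1 lbl2 size12] := two_block_walk c p1 c' p2 rest.
have xL := pt_size a (qword_walk bs); rewrite (qword_walk_endp w) in xL.
set l := qword_walk _ in ch rd xL pt1 pt12 lbl1 lbl2 size12.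
case: w => /= _ ch1 ends1 [cc' ch2 ends2 _].
have c'_def : c' = ~~ c by case: (c) (c') cc' => -[].
rewrite c'_def in lbl2.
pose x := pt a l; pose t := lbl K12 l.
have walk_step k : k < size l -> Sk (t k) (x k, x k.+1) /\ ~ S0 (x k, x k.+1).
  by move=> lt_k; split; [apply: chain_nth ch lt_k | case: (reduced_chain_nth K12 rd lt_k)].
have walk_alt k : k.+1 < size l -> t k <> t k.+1.
  by move=> lt_k; case: (reduced_chain_nth K12 rd (ltnW lt_k)) => _; apply.
have n1_gt0 : 0 < size p1 by rewrite lt0n size_eq0; apply/eqP; apply: block_nonempty ends1.
have n2_gt0 : 0 < size p2 by rewrite lt0n size_eq0; apply/eqP; apply: block_nonempty ends2.
have block1_kind k : k < size p1 -> t k <> own_kind (~~ c).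
  by move=> lt_k; rewrite /t lbl1 //; apply: step_kind_neq_own.
have block2_kind k : k < size p2 -> t (size p1 + k) <> own_kind c.
  by move=> lt_k; rewrite /t lbl2 // -{2}[c]negbK; apply: step_kind_neq_own.
have block1_ends : ~ S12 (a, x (size p1)) by rewrite /x pt1 // pt_size.
have block2_ends : ~ S12 (x (size p1), x (size p1 + size p2)).
  by rewrite /x pt12 pt1 // pt_size.
have block1_own : exists2 k, k < size l & t k = own_kind c.
  have [k lt_k own_k] := block_has_own_step ch1 ends1.
  by exists k; [lia | rewrite /t lbl1 // own_k].
have block2_own : exists2 k, k < size l & t k = own_kind (~~ c).
  have [k lt_k own_k] := block_has_own_step ch2 ends2.
  by exists (size p1 + k); [lia | rewrite /t lbl2 // own_k].
have [b b_le xb] := subloop_in_first_block (erefl (x 0)) xL walk_step walk_alt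
  Q3_free n1_gt0 n2_gt0 size12 block1_kind block2_kind block1_ends block2_ends
  typeII block1_own block2_own.
exists b => //; rewrite -pt1; [exact: xb | by case/andP: b_le].
Qed.

Lemma reduced_qword_shrinks bs : bs <> [::] -> qword a None a bs -> qword_reduced a bs ->
  exists bs', [/\ bs' <> [::], qword a None a bs' & wlen bs' < wlen bs].
Proof.
case: bs => [//|[c p1] [|[c' p2] rest]] _ w red.
  case: w => _ _ + /= end1; rewrite end1.
  by case: S12_equiv => reflS _ _; case; apply: reflS.
have [b /andP[b_gt0 le_bn1] xb] := reduced_qword_subloop w red.
exists ((c, drop b p1) :: (c', p2) :: rest); split=> //; last first.
  by rewrite /wlen /= size_drop; lia.
case: w => /= _ ch1 ends1 w2; have [chd ed] := chain_drop ch1 le_bn1.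
by rewrite xb in chd ed; rewrite /= ed; split.
Qed.

Theorem qword_loop_nil bs : qword a None a bs -> bs = [::].
Proof.
have [n] := ubnP (wlen bs); elim: n bs => // n IHn bs lt_bs w.
case: bs lt_bs w => [//|b bs] lt_bs w; exfalso.
have [bs' [bs'_ne w' lt_bs']] :
    exists bs', [/\ bs' <> [::], qword a None a bs' & wlen bs' < wlen (b :: bs)].
  by case: (qword_reduce w) => [red|//]; apply: reduced_qword_shrinks.
by apply: bs'_ne; apply: IHn w'; lia.
Qed.

End Shrink.

Lemma Q3_free_at_of_reduced (N : set X) v :
  (forall n x, reduced S13 S23 S0 n x -> ~ N (x 0) -> x 0 <> x n.-1) ->
  ~ N v -> Q3_free_at v.
Proof.
move=> free Nv L x t L_gt0 x0 xL step alt.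
have [L1 | L_gt1] : L = 1 \/ 1 < L by lia.
  by subst L; case: (step 0 L_gt0) => _ _; rewrite x0 xL; apply; apply: S0_refl.
apply: (free L.+1 x); rewrite ?x0 ?xL //; split; [lia | | | lia].
  exists (fun k => if t k is K13 then true else false) => k lt_k.
  have [tk Sk_k _] := step k lt_k; split.
    by case: (t k) tk Sk_k.
  move=> lt_k1; have [tk1 _ _] := step k.+1 lt_k1; have := alt k lt_k1.
  by case: (t k) (t k.+1) tk tk1 => -[].
by move=> _ k lt_k; case: (step k lt_k).
Qed.

Definition Qfam := fam3 (Qc true) (Qc false) Q3.

(* The index of [TR] is the vertex missing from the kind. *)
Definition kind_index (k : kind) : 'I_3 :=
  match k with K23 => @Ordinal 3 0 isT | K13 => @Ordinal 3 1 isT | K12 => @Ordinal 3 2 isT end.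

Lemma kind_index_inj : injective kind_index.
Proof. by case=> -[] // /(congr1 val). Qed.

Lemma kind_index_surj (i : 'I_3) : exists k, kind_index k = i.
Proof.
by case: i => -[|[|[|//]]] lt_i; [exists K23 | exists K13 | exists K12]; apply: val_inj.
Qed.

Lemma Sk_Rc k : Sk k `<=` Rc Qfam (kind_index k).
Proof.
move=> p Sk_p -[[|[|[|//]]] lt_m] /=; case: k Sk_p => //= Sk_p _.
all: by [apply: join_subl | apply: join_subr].
Qed.

Lemma R0_S0 : R0 Qfam `<=` S0.
Proof.
move=> p R0p; have Q1p := R0p (@Ordinal 3 0 isT); have Q2p := R0p (@Ordinal 3 1 isT).
have Q3p := R0p (@Ordinal 3 2 isT).
do !split; first by apply: Qc_meet.
- by apply: (Qc_Q3_meet (c := true)).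
- by apply: (Qc_Q3_meet (c := false)).
Qed.

Lemma typeII_splits_at_of_triangle (N : set X) v :
  (forall n x t, treduced_typed Qfam n x t -> proper_II n t -> x 0 = x n.-1 ->
     ~ N (x 0) -> concat_Ri_loops Qfam n x) ->
  ~ N v -> typeII_splits_at v.
Proof.
move=> split_loops Nv L x t x0 xL step alt all_kinds.
have [m [b [b0 bm b_incr b_loop b_seg]]] : concat_Ri_loops Qfam L.+1 x.
  apply: (split_loops _ x (fun k => TR (kind_index (t k)))); rewrite ?x0 ?xL //.
    move=> k lt_k; have [Sk_k notS0] := step k lt_k; split.
      by split; [apply: Sk_Rc | move/R0_S0].
    by move=> lt_k1; apply/eqP => /kind_index_inj; apply: alt.
  split=> [i | i [//]]; have [kd <-] := kind_index_surj i.
  by have [k lt_k tk] := all_kinds kd; exists k; rewrite ?tk.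
have m_gt0 : 0 < m.
  case: m bm {b_incr b_loop b_seg} => //; rewrite b0 => /= L0.
  by have [k] := all_kinds K12; rewrite -L0.
have b1_le j : 0 < j <= m -> b 1 <= b j.
  elim: j => // j IH /andP[_ le_jm]; case: j IH le_jm => // j IH le_jm.
  by apply: leq_trans (IH _) (ltnW (b_incr _ le_jm)); apply: ltnW.
exists (b 1).
  have bL : b m = L := bm.
  apply/andP; split; first by have := b_incr 0 m_gt0; rewrite b0.
  by rewrite -bL b1_le // m_gt0 leqnn.
split; first by rewrite b_loop // x0.
have [i seg] := b_seg 0 m_gt0.
have Qi k : k < b 1 -> Qfam i (x k, x k.+1).
  move=> lt_k; apply: Ri_sub (seg k _); last by rewrite b0.
  by case: i {seg} => -[|[|[|//]]] ?; apply: join_equiv.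
case: i {seg} Qi => -[|[|[|//]]] lt_i Qi.
- by left; exists true.
- by left; exists false.
- by right.
Qed.

Lemma qword_of_reduced n x : reduced (Qc true) (Qc false) S12 n x -> 2 < n ->
  x n.-1 = x 0 -> exists2 bs, bs <> [::] & qword (x 0) None (x 0) bs.
Proof.
move=> [_ [f alt] notS12 _] n_gt2 x_loop.
have chains k : exists p, k.+1 < n -> block_chain (f k) (x k) p /\ endp (x k) p = x k.+1.
  case: (ltnP k.+1 n) => lt_k; last by exists [::].
  have [step _] := alt k lt_k.
  have Qk : Qc (f k) (x k, x k.+1) by case: (f k) step.
  have [p ch ep] := join_chain (F := Sk \o step_kind (f k)) (Sk_equiv _) (Sk_equiv _) Qk.
  by exists p.
have [P hP] := choice chains.
exists [seq (f k, P k) | k <- iota 0 n.-1].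
  by rewrite (_ : n.-1 = n.-2.+1) //; lia.
suff w m k : k + m = n.-1 ->
    qword (x 0) (if k is k'.+1 then Some (f k') else None) (x k)
      [seq (f j, P j) | j <- iota k m].
  exact: w.
elim: m k => [|m IH] k km /=; first by rewrite -x_loop -km addn0.
have lt_k : k.+1 < n by lia.
have [ch ep] := hP k lt_k; rewrite ep; split=> //.
- by case: k {IH km ch ep} lt_k => // k lt_k [fk]; case: (alt k (ltnW lt_k)) => _ /(_ lt_k).
- exact: notS12 n_gt2 k lt_k.
- by apply: IH; lia.
Qed.

Lemma free_amalg_Q3_of_Qc (R : realType) (mu : {measure set X -> \bar R}%R) E :
  free_amalg mu (Qc true) (Qc false) S12 E -> free_amalg mu S13 S23 S0 Q3.
Proof.
apply: free_amalg_sub; [exact: join_subr | exact: join_subr | by move=> p [[? ?] ?] | |].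
  by move=> p [S13p S12p]; apply: S12_Q3_S0 => //; apply: join_subl.
by move=> p [S23p S12p]; apply: S12_Q3_S0 => //; apply: join_subr.
Qed.

Lemma free_amalg_Qc_of_Q3 (R : realType) (mu : {measure set X -> \bar R}%R) :
  triangle_join Qfam mu -> free_amalg mu S13 S23 S0 Q3 ->
  free_amalg mu (Qc true) (Qc false) S12 (join (Qc true) (Qc false)).
Proof.
move=> [N [mN N0 _ split_loops]] [_ _ [N3 [mN3 N30 free3]]].
split=> //; first by move=> p S12p; split; apply: join_subl.
exists (N `|` N3); split; [exact: measurableU | by rewrite measureU0 | ].
move=> n x red Nx x_loop.
have [n2 | n_gt2] : n = 2 \/ 2 < n by case: red; lia.
  by case: red => _ _ _ /(_ n2); rewrite x_loop n2.
have [bs bs_ne w] := qword_of_reduced red n_gt2 (esym x_loop).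
apply: bs_ne; apply: qword_loop_nil w.
  by apply: Q3_free_at_of_reduced free3 _ => N3x; apply: Nx; right.
by apply: typeII_splits_at_of_triangle split_loops _ => Nx'; apply: Nx; left.
Qed.

End Triangle.

Theorem theorem4p4 (d : measure_display) (X : measurableType d) (R : realType)
    (mu : probability X R)
    (R12 R13 R23 : set (X * X)) :
  @standard_borel d X R ->
  nonatomic mu ->
  SP1 mu R12 -> SP1 mu R13 -> SP1 mu R23 ->
  let R1 := join R12 R13 in
  let R2 := join R12 R23 in
  let R3 := join R13 R23 in
  R1 `&` R2 = R12 -> R1 `&` R3 = R13 -> R2 `&` R3 = R23 ->
  let R0 := R12 `&` R13 `&` R23 in
  let Rall := join (join R1 R2) R3 in
  Rall = join (join R12 R23) R13 ->
  triangle_join (fam3 R1 R2 R3) mu ->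
  Rall = join R1 R2 /\
  (free_amalg mu R1 R2 R12 Rall <-> free_amalg mu R13 R23 R0 R3).
Proof.
move=> _ _ [eq12 _ _ _] [eq13 _ _ _] [eq23 _ _ _] R1 R2 R3 R12_meet R13_meet R23_meet
  R0 Rall _ triangle.
have Qc_meet : Qc R12 R13 R23 true `&` Qc R12 R13 R23 false `<=` R12.
  by move=> p Qp; rewrite -R12_meet.
have Qc_Q3_meet c : Qc R12 R13 R23 c `&` Q3 R13 R23 `<=` Sk R12 R13 R23 (own_kind c).
  by case: c => p Qp; [rewrite /= -R13_meet | rewrite /= -R23_meet].
have Rall_def : Rall = join R1 R2.
  apply: join_absorb; apply: join_min; first exact: join_equiv.
    by move=> p R13p; apply: join_subl; apply: join_subr.
  by move=> p R23p; apply: join_subr; apply: join_subr.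
split=> //; rewrite Rall_def; split.
  exact: free_amalg_Q3_of_Qc Qc_Q3_meet _ _ _.
exact: free_amalg_Qc_of_Q3 eq12 eq13 eq23 Qc_meet Qc_Q3_meet _ _ triangle.
Qed.
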